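(* Suppose that $G$ is a graph on $[n]$ with $\langle G\rangle_{K_4} = K_n$, and let $1 \leqslant L \leqslant n$. Then there exists a clique $K \subset K_n$ which is internally spanned by $G$, with $L \leqslant v(K) \leqslant 3L$.
   Context: $\langle G\rangle_{K_4}$ is the closure of $G$ under the $K_4$-bootstrap process on $K_n$: repeatedly add any edge which is the only missing edge of some copy of $K_4$. A clique $K \subset K_n$ is internally spanned by $G$ if $\langle G \cap K\rangle_{K_4} = K$, where $G \cap K$ is the set of edges of $G$ with both endpoints in $V(K)$. *)

From mathcomp Require Import all_boot.
Set Implicit Arguments. Unset Strict Implicit. Unset Printing Implicit Defensive.

(* A graph on a finite vertex type T is a set of edges, each edge being a
   2-element vertex set.  K_n is the set of all 2-element subsets. *)

(* K4-bootstrap closure <G>_{K4} as an inductive predicate on 2-sets: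
   an edge {a,b} is added if, for distinct a,b,c,d, the other five edges of
   the K4 on {a,b,c,d} are already present. *)
Inductive K4cl (T : finType) (G : {set {set T}}) : {set T} -> Prop :=
| K4cl_base e : e \in G -> K4cl G e
| K4cl_step a b c d : uniq [:: a; b; c; d] ->
    K4cl G [set a; c] -> K4cl G [set a; d] -> K4cl G [set b; c] ->
    K4cl G [set b; d] -> K4cl G [set c; d] -> K4cl G [set a; b].

(* G ∩ K, for K the clique on vertex set S *)
Definition induced (T : finType) (G : {set {set T}}) (S : {set T}) :
  {set {set T}} := [set e in G | e \subset S].

Definition internally_spanned (T : finType) (G : {set {set T}}) (S : {set T})
  : Prop :=
  forall e : {set T}, K4cl (induced G S) e <-> (#|e| = 2 /\ e \subset S).

From mathcomp Require Import all_boot zify.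
From Stdlib Require Import Classical.

Set Implicit Arguments. Unset Strict Implicit. Unset Printing Implicit Defensive.

(* Suppose that no internally spanned clique has between L and 3L vertices, so
   that every internally spanned clique on at most 3L vertices has fewer than L.
   Two internally spanned cliques sharing two vertices, or three of them sharing
   pairwise the three vertices of a triangle, have an internally spanned union;
   if the cliques have fewer than L vertices the union has fewer than 3L, hence
   fewer than L.  Replaying the K4-process, every edge of <G> therefore lies in
   an internally spanned clique on fewer than L vertices.  As <G> = K_n, such a
   clique can be enlarged one vertex at a time until it is all of [n], which has
   at least L vertices: a contradiction. *)

Lemma K4cl_subset (T : finType) (G1 G2 : {set {set T}}) e :
  G1 \subset G2 -> K4cl G1 e -> K4cl G2 e.
Proof.
move=> sG12; elim=> [f fG|a b c d abcd _ ac _ ad _ bc _ bd _ cd].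
  by apply: K4cl_base; exact: (subsetP sG12).
exact: K4cl_step abcd ac ad bc bd cd.
Qed.

Lemma subset2 (T : finType) (a b : T) (S : {set T}) :
  ([set a; b] \subset S) = (a \in S) && (b \in S).
Proof. by rewrite subUset !sub1set. Qed.

Definition closure_clique (T : finType) (H : {set {set T}}) (S : {set T}) :=
  forall u v, u \in S -> v \in S -> u != v -> K4cl H [set u; v].

Lemma closure_clique_mono (T : finType) (H1 H2 : {set {set T}}) S :
  H1 \subset H2 -> closure_clique H1 S -> closure_clique H2 S.
Proof.
by move=> sH12 clS u v uS vS uv; apply: K4cl_subset sH12 (clS u v _ _ _).
Qed.

Lemma closure_clique_subset (T : finType) (H : {set {set T}}) (S1 S2 : {set T}) :
  S1 \subset S2 -> closure_clique H S2 -> closure_clique H S1.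
Proof. by move=> sS12 clS u v uS vS; apply: clS; apply: (subsetP sS12). Qed.

(* Each missing edge {u, z} is the last edge of the K4 on {u, z, x, y}. *)
Lemma closure_cliqueU1 (T : finType) (H : {set {set T}}) (A : {set T}) x y z :
  closure_clique H A -> x \in A -> y \in A -> x != y -> x != z -> y != z ->
  K4cl H [set x; z] -> K4cl H [set y; z] -> closure_clique H (z |: A).
Proof.
move=> clA xA yA xy xz yz xzH yzH.
have uzH u : u \in A -> u != z -> K4cl H [set u; z].
  move=> uA uz; have [->|ux] := eqVneq u x => //.
  have [->|uy] := eqVneq u y => //.
  apply: (@K4cl_step _ _ u z x y);
    [|exact: clA|exact: clA|by rewrite setUC|by rewrite setUC|exact: clA].
  by rewrite /= !inE !negb_or uz ux uy xy !(eq_sym z) xz yz.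
move=> u v; rewrite !inE => /predU1P[->|uA] /predU1P[->|vA] uv.
- by rewrite eqxx in uv.
- by rewrite setUC; apply: uzH; rewrite // eq_sym.
- exact: uzH.
- exact: clA.
Qed.

(* The two distinct shared vertices c, d complete every cross pair to a K4. *)
Lemma closure_cliqueU (T : finType) (H : {set {set T}}) (A B : {set T}) c d :
  closure_clique H A -> closure_clique H B ->
  c \in A -> c \in B -> d \in A -> d \in B -> c != d ->
  closure_clique H (A :|: B).
Proof.
move=> clA clB cA cB dA dB cd.
have crossH a b : a \in A -> a \notin B -> b \in B -> b \notin A ->
    K4cl H [set a; b].
  move=> aA aB bB bA.
  have [ab ac ad] : [/\ a != b, a != c & a != d].
    by split; apply: contraNneq aB => ->.
  have [bc bd] : b != c /\ b != d by split; apply: contraNneq bA => ->.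
  apply: (@K4cl_step _ _ a b c d);
    [|exact: clA|exact: clA|exact: clB|exact: clB|exact: clA].
  by rewrite /= !inE !negb_or ab ac ad bc bd cd.
have inB w : w \in A :|: B -> w \notin A -> w \in B.
  by rewrite inE; case: (w \in A).
move=> u v uAB vAB uv.
have [uA|uA] := boolP (u \in A); have [vA|vA] := boolP (v \in A).
- exact: clA.
- have vB := inB v vAB vA.
  by have [uB|uB] := boolP (u \in B); [exact: clB | exact: crossH].
- have uB := inB u uAB uA.
  by have [vB|vB] := boolP (v \in B); [exact: clB | rewrite setUC; exact: crossH].
- exact: clB (inB u uAB uA) (inB v vAB vA) uv.
Qed.

Lemma induced_subset (T : finType) (G : {set {set T}}) (S1 S2 : {set T}) :
  S1 \subset S2 -> induced G S1 \subset induced G S2.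
Proof.
move=> sS12; apply/subsetP => e; rewrite !inE => /andP[-> eS1].
exact: subset_trans eS1 sS12.
Qed.

Section InternalSpanning.

Variables (T : finType) (G : {set {set T}}).
Hypothesis G_edges : forall e, e \in G -> #|e| = 2.

Lemma internally_spannedP S :
  internally_spanned G S <-> closure_clique (induced G S) S.
Proof.
split=> [spS u v uS vS uv | clS e].
  by apply/spS; rewrite cards2 uv subset2 uS vS.
split.
- elim=> [f | a b c d abcd _ [_ acS] _ _ _ [_ bcS] _ _ _ _].
    by rewrite inE => /andP[fG fS]; split=> //; exact: G_edges.
  have ab : a != b by move: abcd; rewrite /= inE negb_or => /andP[/andP[]].
  move: acS bcS; rewrite !subset2 => /andP[aS _] /andP[bS _].
  by rewrite cards2 ab aS bS.
- case=> /eqP/cards2P[u [v [uv ->]]].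
  by rewrite subset2 => /andP[uS vS]; exact: clS.
Qed.

Lemma internally_spanned_clique (A U : {set T}) :
  internally_spanned G A -> A \subset U -> closure_clique (induced G U) A.
Proof.
move=> /internally_spannedP clA sAU.
exact: closure_clique_mono (induced_subset G sAU) clA.
Qed.

Lemma internally_spanned1 v : internally_spanned G [set v].
Proof. by apply/internally_spannedP => u w /set1P-> /set1P->; rewrite eqxx. Qed.

Lemma internally_spanned_edge f : f \in G -> internally_spanned G f.
Proof.
move=> fG; apply/internally_spannedP => u w uf wf uw.
have -> : [set u; w] = f.
  by apply/eqP; rewrite eqEcard subset2 uf wf G_edges // cards2 uw.
by apply: K4cl_base; rewrite inE fG subxx.
Qed.

Lemma internally_spannedU A B c d :
  internally_spanned G A -> internally_spanned G B ->
  c \in A -> c \in B -> d \in A -> d \in B -> c != d ->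
  internally_spanned G (A :|: B).
Proof.
move=> spA spB cA cB dA dB cd; apply/internally_spannedP.
apply: closure_cliqueU cA cB dA dB cd; apply: internally_spanned_clique => //.
  exact: subsetUl.
exact: subsetUr.
Qed.

(* A triangle x, y, z whose sides lie in A, C and B respectively: z is first
   added to A, which then shares two vertices with B and with C. *)
Lemma internally_spannedU3 A B C x y z :
  internally_spanned G A -> internally_spanned G B -> internally_spanned G C ->
  x \in A -> x \in B -> y \in A -> y \in C -> z \in B -> z \in C ->
  x != y -> x != z -> y != z ->
  internally_spanned G (A :|: B :|: C).
Proof.
move=> spA spB spC xA xB yA yC zB zC xy xz yz; apply/internally_spannedP.
set U := A :|: B :|: C.
have /subUsetP[/subUsetP[sAU sBU] sCU] : U \subset U := subxx U.
have clB := internally_spanned_clique spB sBU.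
have clC := internally_spanned_clique spC sCU.
have clzA : closure_clique (induced G U) (z |: A).
  exact: closure_cliqueU1 (internally_spanned_clique spA sAU) xA yA xy xz yz
    (clB x z xB zB xz) (clC y z yC zC yz).
have clzAB := closure_cliqueU clzA clB (setU1r z xA) xB (setU11 z A) zB xz.
have yzAB : y \in z |: A :|: B by rewrite inE (setU1r z yA).
have zzAB : z \in z |: A :|: B by rewrite inE setU11.
have clzABC := closure_cliqueU clzAB clC yzAB yC zzAB zC yz.
by apply: closure_clique_subset clzABC; rewrite setSU // setSU // subsetU1.
Qed.

End InternalSpanning.

Section SizeGap.

Variables (T : finType) (G : {set {set T}}) (L : nat).
Hypothesis G_edges : forall e, e \in G -> #|e| = 2.
Hypothesis L_gt0 : 0 < L.
Hypothesis spanned_gap :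
  forall S, internally_spanned G S -> #|S| <= 3 * L -> #|S| < L.

Definition small_spanned (S : {set T}) := internally_spanned G S /\ #|S| < L.

Lemma small_of_spanned S :
  internally_spanned G S -> #|S| <= 3 * L -> small_spanned S.
Proof. by move=> spS leS; split; last exact: spanned_gap. Qed.

Lemma small_spanned1 v : small_spanned [set v].
Proof.
by apply: small_of_spanned; [exact: internally_spanned1 | rewrite cards1; lia].
Qed.

Lemma small_spannedU A B c d :
  small_spanned A -> small_spanned B ->
  c \in A -> c \in B -> d \in A -> d \in B -> c != d ->
  small_spanned (A :|: B).
Proof.
move=> [spA ltA] [spB ltB] cA cB dA dB cd; apply: small_of_spanned.
  exact: internally_spannedU spA spB cA cB dA dB cd.
by have := cardsU A B; lia.
Qed.

Lemma small_spannedU3 A B C x y z :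
  small_spanned A -> small_spanned B -> small_spanned C ->
  x \in A -> x \in B -> y \in A -> y \in C -> z \in B -> z \in C ->
  x != y -> x != z -> y != z ->
  small_spanned (A :|: B :|: C).
Proof.
move=> [spA ltA] [spB ltB] [spC ltC] xA xB yA yC zB zC xy xz yz.
apply: small_of_spanned.
  exact: internally_spannedU3 spA spB spC xA xB yA yC zB zC xy xz yz.
by have := cardsU A B; have := cardsU (A :|: B) C; lia.
Qed.

Lemma small_spanned_K4cl e :
  K4cl G e -> exists2 S, small_spanned S & e \subset S.
Proof.
elim=> [f fG | a b c d abcd _ [S1 sm1 acS1] _ [S2 sm2 adS2] _ [S3 sm3 bcS3]
              _ [S4 sm4 bdS4] _ [S5 sm5 cdS5]].
  exists f => //; apply: small_of_spanned; first exact: internally_spanned_edge.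
  by rewrite G_edges //; lia.
move: abcd acS1 adS2 bcS3 bdS4 cdS5; rewrite /= !inE !negb_or !subset2 andbT.
case/and3P=> /and3P[ab ac ad] /andP[bc bd] cd.
move=> /andP[aS1 cS1] /andP[aS2 dS2] /andP[bS3 cS3] /andP[bS4 dS4].
move=> /andP[cS5 dS5].
have smA := small_spannedU3 sm1 sm2 sm5 aS1 aS2 cS1 cS5 dS2 dS5 ac ad cd.
have smB := small_spannedU3 sm3 sm4 sm5 bS3 bS4 cS3 cS5 dS4 dS5 bc bd cd.
exists (S1 :|: S2 :|: S5 :|: (S3 :|: S4 :|: S5)); last first.
  by rewrite subset2 !inE aS1 bS3 ?orbT.
apply: small_spannedU smA smB _ _ _ _ cd;
  by rewrite !inE ?cS1 ?cS3 ?dS2 ?dS4 ?orbT.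
Qed.

Hypothesis G_spans : forall x y : T, x != y -> K4cl G [set x; y].

Lemma small_spanned_grow S x w :
  small_spanned S -> x \in S -> w \notin S ->
  exists2 S', small_spanned S' & w |: S \subset S'.
Proof.
move=> smS xS wS.
have xw : x != w by apply: contraNneq wS => <-.
have [S1 sm1] := small_spanned_K4cl (G_spans xw).
rewrite subset2 => /andP[xS1 wS1].
have [Sx0 | [y]] := set_0Vmem (S :\ x).
  exists S1 => //; rewrite subUset sub1set wS1 /=.
  apply: subset_trans (_ : [set x] \subset S1); last by rewrite sub1set.
  by rewrite -setD_eq0 Sx0.
rewrite !inE => /andP[yx yS].
have yw : y != w by apply: contraNneq wS => <-.
have [S2 sm2] := small_spanned_K4cl (G_spans yw).
rewrite subset2 => /andP[yS2 wS2].
exists (S :|: S1 :|: S2).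
  have xy : x != y by rewrite eq_sym.
  exact: small_spannedU3 smS sm1 sm2 xS xS1 yS yS2 wS1 wS2 xy xw yw.
by rewrite subUset sub1set !inE wS1 orbT -setUA subsetUl.
Qed.

Lemma small_spanned_setT (v : T) : small_spanned [set: T].
Proof.
suff grow S : small_spanned S -> v \in S -> small_spanned [set: T].
  exact: grow (small_spanned1 v) (set11 v).
elim: {S}_.+1 {-2}S (ltnSn #|~: S|) => // k IH S ltSk smS vS.
have [S0 | [w]] := set_0Vmem (~: S).
  by rewrite -(setCK S) S0 setC0 in smS.
rewrite inE => wS.
have [S' smS' sS'] := small_spanned_grow smS vS wS.
apply: IH smS' _; last by apply: (subsetP sS'); rewrite setU1r.
have := subset_leq_card sS'; rewrite cardsU1 wS.
by have := cardsC S; have := cardsC S'; lia.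
Qed.

End SizeGap.

Theorem lemma4p4 (n : nat) (G : {set {set 'I_n}}) :
  (forall e, e \in G -> #|e| = 2) ->
  (forall e : {set 'I_n}, K4cl G e <-> #|e| = 2) ->
  forall L : nat, 1 <= L <= n ->
  exists S : {set 'I_n}, internally_spanned G S /\ L <= #|S| <= 3 * L.
Proof.
move=> G_edges G_closure L /andP[L_gt0 L_le_n].
apply: NNPP => no_mid.
have gap S : internally_spanned G S -> #|S| <= 3 * L -> #|S| < L.
  move=> spS leS; rewrite ltnNge; apply/negP => geS.
  by apply: no_mid; exists S; rewrite geS leS.
have G_spans x y : x != y -> K4cl G [set x; y].
  by move=> xy; apply/G_closure; rewrite cards2 xy.
pose v : 'I_n := Ordinal (leq_trans L_gt0 L_le_n).
have [_] := small_spanned_setT G_edges L_gt0 gap G_spans v.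
by rewrite cardsT card_ord ltnNge L_le_n.
Qed.
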